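(* Let $\sigma=\begin{pmatrix}\frac13&0\\0&\frac23\end{pmatrix}$ and $D=\sigma\otimes\frac{I_3}{3}\in M_6$. There exists an extreme point of the convex set $\mathcal{CP}(M_6,M_6;D,D)$ with Choi rank $8$.
   Context: $M_n$ denotes the complex $n\times n$ matrices. For positive semidefinite $A\in M_{d_1}$, $B\in M_{d_2}$, $\mathcal{CP}(M_{d_1},M_{d_2};A,B)$ is the convex set of completely positive maps $\Phi:M_{d_1}\to M_{d_2}$ with $\Phi(I_{d_1})=B$ and $\Phi^*(I_{d_2})=A$ ($\Phi^*$ the Hilbert–Schmidt adjoint); equivalently $\Phi(X)=\sum_iK_iXK_i^\dagger$ with $\sum_iK_i^\dagger K_i=A$, $\sum_iK_iK_i^\dagger=B$. An extreme point of a convex set $\mathcal{K}$ is an element not expressible as $t\Phi_1+(1-t)\Phi_2$ with $t\in(0,1)$ and distinct $\Phi_1,\Phi_2\in\mathcal{K}$. The Choi rank of $\Phi$ is the rank of $\sum_{r,s}E_{rs}\otimes\Phi(E_{rs})$. *)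

From HB Require Import structures.
From mathcomp Require Import all_boot all_order all_algebra.
From mathcomp Require Import reals.
From mathcomp Require Import complex mxtens.
Set Implicit Arguments. Unset Strict Implicit. Unset Printing Implicit Defensive.
Import Order.TTheory GRing.Theory Num.Theory.
Local Open Scope ring_scope.

Section QuantumDefs.
Variable C : numClosedFieldType.

Definition adjmx m n (A : 'M[C]_(m, n)) : 'M[C]_(n, m) := (map_mx Num.conj A)^T.

Definition psdmx n (A : 'M[C]_n) : Prop :=
  adjmx A = A /\ forall v : 'cV[C]_n, 0 <= (adjmx v *m A *m v) 0 0.

Definition linmap d1 d2 (Phi : 'M[C]_d1 -> 'M[C]_d2) : Prop :=
  forall (a : C) (X Y : 'M[C]_d1), Phi (a *: X + Y) = a *: Phi X + Phi Y.

Definition positive_map d1 d2 (Phi : 'M[C]_d1 -> 'M[C]_d2) : Prop :=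
  forall X, psdmx X -> psdmx (Phi X).

(* id_{M_k} (x) Phi acting on M_k(M_d1) = k x k block matrices with d1 x d1 blocks *)
Definition ampliation k d1 d2 (Phi : 'M[C]_d1 -> 'M[C]_d2)
  (X : 'M[C]_(\sum_(i < k) d1)) : 'M[C]_(\sum_(i < k) d2) :=
  \mxblock_(i < k, j < k) Phi (submxblock X i j).

Definition completely_positive d1 d2 (Phi : 'M[C]_d1 -> 'M[C]_d2) : Prop :=
  forall k : nat, positive_map (@ampliation k d1 d2 Phi).

(* Phi^*(Y) = Z for the Hilbert--Schmidt adjoint Phi^*, i.e.
   <Z, X>_HS = <Y, Phi X>_HS for all X, with <A,B>_HS = tr(A^dagger B) *)
Definition hs_adjoint_at d1 d2 (Phi : 'M[C]_d1 -> 'M[C]_d2)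
  (Y : 'M[C]_d2) (Z : 'M[C]_d1) : Prop :=
  forall X : 'M[C]_d1, \tr (adjmx Z *m X) = \tr (adjmx Y *m Phi X).

Definition CPset d1 d2 (A : 'M[C]_d1) (B : 'M[C]_d2)
  (Phi : 'M[C]_d1 -> 'M[C]_d2) : Prop :=
  [/\ linmap Phi, completely_positive Phi, Phi 1%:M = B
    & hs_adjoint_at Phi 1%:M A].

Definition extreme_point d1 d2 (K : ('M[C]_d1 -> 'M[C]_d2) -> Prop)
  (Phi : 'M[C]_d1 -> 'M[C]_d2) : Prop :=
  K Phi /\
  ~ (exists (t : C) (Phi1 Phi2 : 'M[C]_d1 -> 'M[C]_d2),
        [/\ 0 < t < 1, K Phi1, K Phi2, Phi1 <> Phi2
          & Phi = (fun X => t *: Phi1 X + (1 - t) *: Phi2 X)]).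

(* Choi matrix  sum_{r,s} E_rs (x) Phi(E_rs)  as a d1 x d1 block matrix *)
Definition choi_mx d1 d2 (Phi : 'M[C]_d1 -> 'M[C]_d2) : 'M[C]_(\sum_(r < d1) d2) :=
  \mxblock_(r < d1, s < d1) Phi (delta_mx r s).

Definition choi_rank d1 d2 (Phi : 'M[C]_d1 -> 'M[C]_d2) : nat := \rank (choi_mx Phi).

End QuantumDefs.

Definition sigma_mx (C : numClosedFieldType) : 'M[C]_2 :=
  \matrix_(i < 2, j < 2)
    (if i == j then (if (i : nat) == 0%N then 3^-1 else 2 / 3) else 0).

Definition D_mx (C : numClosedFieldType) : 'M[C]_6 :=
  tensmx (sigma_mx C) (3^-1 *: (1%:M : 'M[C]_3)).

From HB Require Import structures.
From mathcomp Require Import all_boot all_order all_algebra.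
From mathcomp Require Import reals.
From mathcomp Require Import complex mxtens.
From mathcomp Require Import ring lra.

(* If the Kraus operators K_1..K_k of Phi are "Gram-free", i.e. the k^2
   pairs (K_j^† K_i, K_i K_j^†) are linearly independent, then Phi is an extreme
   point of CP(A, B) for A = sum K_i^† K_i and B = sum K_i K_i^†.  Indeed, if
   Phi = t Phi1 + (1 - t) Phi2, the Choi matrix of Phi1 is dominated by the Choi
   matrix V V^† of Phi, where the columns of V are the vectorised K_i; hence it
   equals V M V^† for some M, i.e. Phi1 = sum M_ij K_i X K_j^†.  The constraints
   Phi1(1) = B and Phi1^*(1) = A then read sum (M - 1)_ij (K_j^† K_i, K_i K_j^†) = 0,
   so M = 1.  Gram-freeness also makes the K_i linearly independent, so V has
   rank k and so does the Choi matrix.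

   The witness consists of eight 6 x 6 Kraus operators, each supported on two
   cells of the 6 x 6 grid, with squared moduli w/81 whose row and column sums
   are the diagonal of D.  Any two operators share exactly one row or column, and
   no two rows (columns) have nonempty cells in two common columns (rows), so
   each off-diagonal coefficient c_ij is isolated in one entry of
   sum c_ij K_j^† K_i or of sum c_ij K_i K_j^†.  The diagonal coefficients satisfy
   a 12 x 8 real linear system (one equation per row and column of the grid) of
   full rank. *)

Set Implicit Arguments. Unset Strict Implicit. Unset Printing Implicit Defensive.
Import Order.TTheory GRing.Theory Num.Theory.
Local Open Scope ring_scope.

Section Adjoint.
Variable C : numClosedFieldType.

Lemma adjmxE m n (A : 'M[C]_(m, n)) i j : adjmx A i j = (A j i)^*.
Proof. by rewrite !mxE. Qed.

Lemma adjmxK m n (A : 'M[C]_(m, n)) : adjmx (adjmx A) = A.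
Proof. by apply/matrixP => i j; rewrite !adjmxE conjCK. Qed.

Lemma adjmxM m n p (A : 'M[C]_(m, n)) (B : 'M[C]_(n, p)) :
  adjmx (A *m B) = adjmx B *m adjmx A.
Proof. by rewrite /adjmx map_mxM trmx_mul. Qed.

Lemma adjmxD m n (A B : 'M[C]_(m, n)) : adjmx (A + B) = adjmx A + adjmx B.
Proof. by rewrite /adjmx map_mxD linearD. Qed.

Lemma adjmxZ m n a (A : 'M[C]_(m, n)) : adjmx (a *: A) = a^* *: adjmx A.
Proof. by apply/matrixP => i j; rewrite !mxE rmorphM. Qed.

Lemma adjmxN m n (A : 'M[C]_(m, n)) : adjmx (- A) = - adjmx A.
Proof. by rewrite -scaleN1r adjmxZ rmorphN1 scaleN1r. Qed.

Lemma adjmx_sum m n (I : finType) (F : I -> 'M[C]_(m, n)) :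
  adjmx (\sum_i F i) = \sum_i adjmx (F i).
Proof. by rewrite /adjmx map_mx_sum linear_sum. Qed.

Lemma adjmx0 m n : adjmx (0 : 'M[C]_(m, n)) = 0.
Proof. by rewrite /adjmx map_mx0 trmx0. Qed.

Lemma adjmx1 n : adjmx (1%:M : 'M[C]_n) = 1%:M.
Proof. by apply/matrixP => i j; rewrite !mxE eq_sym conjC_nat. Qed.

Lemma adjmx_delta m n (i : 'I_m) (j : 'I_n) :
  adjmx (delta_mx i j : 'M[C]_(m, n)) = delta_mx j i.
Proof. by apply/matrixP => a b; rewrite !mxE andbC conjC_nat. Qed.

Lemma adjmx_mxblock k n (B_ : 'I_k -> 'I_k -> 'M[C]_n) :
  adjmx (\mxblock_(i < k, j < k) B_ i j) = \mxblock_(i < k, j < k) adjmx (B_ j i).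
Proof. by apply/matrixP => i j; rewrite !mxE. Qed.

Lemma adjmx_mxcol k m n (B_ : 'I_k -> 'M[C]_(m, n)) :
  adjmx (\mxcol_(r < k) B_ r) = \mxrow_(r < k) adjmx (B_ r).
Proof. by apply/matrixP => i j; rewrite !mxE. Qed.

Lemma adjmx_mul_ge0 m (y : 'cV[C]_m) : 0 <= (adjmx y *m y) 0 0.
Proof. by rewrite mxE sumr_ge0 // => i _; rewrite !mxE mulrC mul_conjC_ge0. Qed.

Lemma adjmx_mul_eq0 m (y : 'cV[C]_m) : (adjmx y *m y) 0 0 = 0 -> y = 0.
Proof.
have ge0 i : 0 <= adjmx y 0 i * y i 0 by rewrite !mxE mulrC mul_conjC_ge0.
rewrite mxE => /(psumr_eq0P (fun i _ => ge0 i)) y0.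
apply/matrixP => i j; rewrite (ord1 j) mxE; apply/eqP.
by rewrite -mul_conjC_eq0 mulrC -(adjmxE y) y0.
Qed.

End Adjoint.

Lemma quad_ge0_eq0 (F : numFieldType) (N Q : F) : 0 <= N -> 0 <= Q ->
  (forall s, 0 <= s -> 0 <= s ^+ 2 * Q - s *+ 2 * N) -> N = 0.
Proof.
move=> N0 Q0 h; have Q1 : 0 < Q + 1 by rewrite ltr_wpDl.
have := h (N / (Q + 1)) (divr_ge0 N0 (ltW Q1)).
have -> : (N / (Q + 1)) ^+ 2 * Q - N / (Q + 1) *+ 2 * N =
          - (N ^+ 2 * ((Q + 2) / (Q + 1) ^+ 2)).
  by field; rewrite gt_eqF.
rewrite oppr_ge0 pmulr_lle0 ?divr_gt0 ?exprn_gt0 ?ltr_wpDl //.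
by move=> N2; apply/eqP; rewrite -sqrf_eq0 eq_le N2 exprn_ge0.
Qed.

Section Psd.
Variable C : numClosedFieldType.

Lemma psdmx0 n : psdmx (0 : 'M[C]_n).
Proof. by split=> [|v]; rewrite ?adjmx0 // mulmx0 mul0mx mxE. Qed.

Lemma psdmxD n (A B : 'M[C]_n) : psdmx A -> psdmx B -> psdmx (A + B).
Proof.
case=> hA qA [hB qB]; split=> [|v]; first by rewrite adjmxD hA hB.
by rewrite mulmxDr mulmxDl mxE addr_ge0.
Qed.

Lemma psdmx_sum n (I : finType) (F : I -> 'M[C]_n) :
  (forall i, psdmx (F i)) -> psdmx (\sum_i F i).
Proof. by move=> psdF; apply: big_ind => //; [exact: psdmx0 | exact: psdmxD]. Qed.

Lemma psdmx_mul_adj m n (U : 'M[C]_(m, n)) : psdmx (U *m adjmx U).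
Proof.
split=> [|v]; first by rewrite adjmxM adjmxK.
by have := adjmx_mul_ge0 (adjmx U *m v); rewrite adjmxM adjmxK !mulmxA.
Qed.

Lemma psdmx_conj m n (W : 'M[C]_(m, n)) (X : 'M[C]_n) :
  psdmx X -> psdmx (W *m X *m adjmx W).
Proof.
case=> hX qX; split=> [|v]; first by rewrite !adjmxM adjmxK hX mulmxA.
by have := qX (adjmx W *m v); rewrite adjmxM adjmxK !mulmxA.
Qed.

Lemma psdmx_form_eq0 n (A : 'M[C]_n) (u : 'cV_n) :
  psdmx A -> (adjmx u *m A *m u) 0 0 = 0 -> A *m u = 0.
Proof.
case=> hA qA u0; apply: adjmx_mul_eq0.
set w := A *m u; have wE : A *m u = w by []; clearbody w.
have uA : adjmx u *m A = adjmx w by rewrite -wE adjmxM hA.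
have wu : adjmx w *m u = 0 by apply/matrixP => i j; rewrite !ord1 -uA u0 mxE.
(* the form at [u - s *: w] is [s ^+ 2 * w^† A w - 2 s * w^† w] *)
apply: quad_ge0_eq0 (adjmx_mul_ge0 w) (qA w) _ => s s0.
have := qA (u - s *: w); congr (0 <= _).
rewrite adjmxD adjmxN adjmxZ (geC0_conj s0) !(mulmxDl, mulmxDr, mulNmx, mulmxN).
rewrite -!scalemxAl -!scalemxAr uA -(mulmxA _ A u) wE wu.
by rewrite !mxE; ring.
Qed.

Lemma psdmx_summand_ker m p (V : 'M[C]_(m, p)) (P Q : 'M[C]_m) t (u : 'cV_m) :
  psdmx P -> psdmx Q -> 0 < t -> 0 <= 1 - t ->
  V *m adjmx V = t *: P + (1 - t) *: Q -> adjmx V *m u = 0 -> P *m u = 0.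
Proof.
move=> psdP psdQ t_gt0 t_le1 VVE Vu; apply: (psdmx_form_eq0 psdP).
have : (adjmx u *m (V *m adjmx V) *m u) 0 0 = 0.
  by rewrite !mulmxA -(mulmxA _ _ u) Vu mulmx0 mxE.
rewrite VVE mulmxDr mulmxDl -!scalemxAr -!scalemxAl mxE [X in _ + X]mxE [X in X + _]mxE.
move/eqP; rewrite paddr_eq0 ?mulr_ge0 ?(ltW t_gt0) ?psdP.2 ?psdQ.2 //.
by case/andP; rewrite mulf_eq0 (gt_eqF t_gt0) => /eqP.
Qed.

Lemma psdmx_summand_factor m p (V : 'M[C]_(m, p)) (L : 'M[C]_(p, m)) (P Q : 'M[C]_m) t :
  L *m V = 1%:M -> psdmx P -> psdmx Q -> 0 < t -> 0 <= 1 - t ->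
  V *m adjmx V = t *: P + (1 - t) *: Q -> P = V *m (L *m P *m adjmx L) *m adjmx V.
Proof.
move=> LV psdP psdQ t_gt0 t_le1 VVE.
have kerV q (U : 'M_(m, q)) : adjmx V *m U = 0 -> P *m U = 0.
  move=> VU; apply/matrixP => a b.
  have /matrixP /(_ a 0) : P *m (U *m (delta_mx b 0 : 'cV_q)) = 0.
    apply: (psdmx_summand_ker psdP psdQ t_gt0 t_le1 VVE).
    by rewrite mulmxA VU mul0mx.
  by rewrite mulmxA -colE !mxE.
have PVL : P = P *m adjmx L *m adjmx V.
  apply/eqP; rewrite -subr_eq0 -mulmxA -{1}[P]mulmx1 -mulmxBr; apply/eqP/kerV.
  by rewrite mulmxBr mulmx1 mulmxA -adjmxM LV adjmx1 mul1mx subrr.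
have VLP : P = V *m L *m P.
  by have hP : adjmx P = P := psdP.1; rewrite -{1}hP {1}PVL !adjmxM !adjmxK hP mulmxA.
by rewrite {1}VLP {1}PVL !mulmxA.
Qed.

End Psd.

Section LinearMaps.
Variable C : numClosedFieldType.

Lemma linmap0 m n (f : 'M[C]_m -> 'M[C]_n) : linmap f -> f 0 = 0.
Proof. by move=> lf; have := lf 1 0 0; rewrite !scale1r addr0 -{1}[f 0]add0r => /addIr <-. Qed.

Lemma linmapD m n (f : 'M[C]_m -> 'M[C]_n) X Y : linmap f -> f (X + Y) = f X + f Y.
Proof. by move=> lf; have := lf 1 X Y; rewrite !scale1r. Qed.

Lemma linmapZ m n (f : 'M[C]_m -> 'M[C]_n) a X : linmap f -> f (a *: X) = a *: f X.
Proof. by move=> lf; rewrite -[_ *: X]addr0 lf linmap0 ?addr0. Qed.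

Lemma linmap_sum m n (f : 'M[C]_m -> 'M[C]_n) (I : finType) (F : I -> 'M[C]_m) :
  linmap f -> f (\sum_i F i) = \sum_i f (F i).
Proof. by move=> lf; apply: big_morph => [X Y|]; [exact: linmapD | exact: linmap0]. Qed.

Lemma linmap_choi_eq m n (f g : 'M[C]_m -> 'M[C]_n) :
  linmap f -> linmap g -> choi_mx f = choi_mx g -> f =1 g.
Proof.
rewrite /choi_mx => lf lg /eq_mxblockP fg X.
rewrite (matrix_sum_delta X) !linmap_sum //; apply: eq_bigr => i _.
by rewrite !linmap_sum //; apply: eq_bigr => j _; rewrite !linmapZ // fg.
Qed.

Lemma eq_choi_mx m n (f g : 'M[C]_m -> 'M[C]_n) : f =1 g -> choi_mx f = choi_mx g.
Proof. by move=> fg; apply: eq_mxblock => i j. Qed.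

Lemma choi_mx_psd n (f : 'M[C]_n -> 'M[C]_n) :
  completely_positive f -> psdmx (choi_mx f).
Proof.
move=> cpf; pose e := \mxcol_(i < n) (delta_mx i 0 : 'M[C]_(n, 1)).
have := cpf n _ (psdmx_mul_adj e); congr psdmx.
rewrite adjmx_mxcol mul_mxcol_mxrow /ampliation /choi_mx.
by apply: eq_mxblock => i j; rewrite mxblockK adjmx_delta mul_delta_mx.
Qed.

Lemma mxtrace_mul_delta n (Y : 'M[C]_n) i j : \tr (Y *m delta_mx i j) = Y j i.
Proof.
rewrite /mxtrace (bigD1 j) //= big1 => [|a /negbTE aj]; rewrite mxE.
  rewrite (bigD1 i) //= big1 => [|b /negbTE bi]; first by rewrite mxE !eqxx mulr1 !addr0.
  by rewrite mxE bi mulr0.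
by rewrite big1 // => b _; rewrite mxE aj andbF mulr0.
Qed.

Lemma mxtrace_mul_eq0 n (Y : 'M[C]_n) : (forall X, \tr (Y *m X) = 0) -> Y = 0.
Proof. by move=> Y0; apply/matrixP => i j; rewrite -mxtrace_mul_delta Y0 mxE. Qed.

End LinearMaps.

Lemma sum_mx1_scale (R : pzRingType) (V : lmodType R) k (F : 'I_k -> V) i :
  \sum_j (1%:M : 'M[R]_k) i j *: F j = F i.
Proof.
rewrite (bigD1 i) //= big1 => [|j /negbTE ji]; first by rewrite mxE eqxx scale1r addr0.
by rewrite mxE eq_sym ji scale0r.
Qed.

Section Kraus.
Variables (C : numClosedFieldType) (n k : nat) (K : 'I_k -> 'M[C]_n).

Definition krausM (M : 'M[C]_k) (X : 'M[C]_n) : 'M[C]_n :=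
  \sum_i \sum_j M i j *: (K i *m X *m adjmx (K j)).

Definition krausM_dual (M : 'M[C]_k) (Y : 'M[C]_n) : 'M[C]_n :=
  \sum_i \sum_j M i j *: (adjmx (K j) *m Y *m K i).

Definition kraus (X : 'M[C]_n) : 'M[C]_n := \sum_i K i *m X *m adjmx (K i).

Definition kraus_vecmx : 'M[C]_(\sum_(r < n) n, k) :=
  \mxcol_(r < n) \matrix_(a < n, l < k) K l a r.

Definition kraus_gram_free : Prop := forall M : 'M[C]_k,
  krausM M 1%:M = 0 -> krausM_dual M 1%:M = 0 -> M = 0.

Lemma krausM1 : krausM 1%:M =1 kraus.
Proof. by move=> X; apply: eq_bigr => i _; rewrite sum_mx1_scale. Qed.

Lemma krausM_dual1 Y : krausM_dual 1%:M Y = \sum_i adjmx (K i) *m Y *m K i.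
Proof. by apply: eq_bigr => i _; rewrite sum_mx1_scale. Qed.

Lemma krausMB M N X : krausM (M - N) X = krausM M X - krausM N X.
Proof.
rewrite -sumrB; apply: eq_bigr => i _; rewrite -sumrB; apply: eq_bigr => j _.
by rewrite !mxE scalerBl.
Qed.

Lemma krausM_dualB M N Y : krausM_dual (M - N) Y = krausM_dual M Y - krausM_dual N Y.
Proof.
rewrite -sumrB; apply: eq_bigr => i _; rewrite -sumrB; apply: eq_bigr => j _.
by rewrite !mxE scalerBl.
Qed.

Lemma linmap_krausM M : linmap (krausM M).
Proof.
move=> a X Y; rewrite scaler_sumr -big_split; apply: eq_bigr => i _.
rewrite scaler_sumr -big_split; apply: eq_bigr => j _.
by rewrite mulmxDr mulmxDl -scalemxAr -scalemxAl scalerDr !scalerA mulrC.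
Qed.

Lemma mxtrace_krausM M X : \tr (krausM M X) = \tr (krausM_dual M 1%:M *m X).
Proof.
rewrite mulmx_suml !raddf_sum; apply: eq_bigr => i _.
rewrite mulmx_suml !raddf_sum; apply: eq_bigr => j _.
by rewrite -scalemxAl /= !mxtraceZ mulmx1 mxtrace_mulC !mulmxA.
Qed.

Lemma mul_delta_mxE m (A B : 'M[C]_m) r s a b :
  (A *m delta_mx r s *m B) a b = A a r * B s b.
Proof.
rewrite -(@mul_delta_mx _ m 1 m 0) mulmxA -colE -mulmxA -rowE mxE big_ord1.
by rewrite !mxE.
Qed.

Lemma choi_krausM M : choi_mx (krausM M) = kraus_vecmx *m M *m adjmx kraus_vecmx.
Proof.
rewrite adjmx_mxcol mxcol_mul mul_mxcol_mxrow; apply: eq_mxblock => r s.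
apply/matrixP => a b; rewrite summxE mxE.
under eq_bigr do rewrite summxE.
rewrite exchange_big; apply: eq_bigr => j _; rewrite !mxE mulr_suml.
by apply: eq_bigr => i _; rewrite mxE mul_delta_mxE !mxE; ring.
Qed.

Lemma adjmx_mxdiag k' (B : 'M[C]_n) :
  adjmx (\mxdiag_(i < k') B) = \mxdiag_(i < k') adjmx B.
Proof.
rewrite /mxdiag adjmx_mxblock; apply: eq_mxblock => i j.
by rewrite eq_sym; case: eqP; rewrite ?adjmx0 // !conform_mx_id.
Qed.

Lemma ampliation_kraus k' (X : 'M[C]_(\sum_(i < k') n)) :
  ampliation kraus X =
  \sum_l \mxdiag_(i < k') K l *m X *m adjmx (\mxdiag_(i < k') K l).
Proof.
have -> : \sum_l \mxdiag_(i < k') K l *m X *m adjmx (\mxdiag_(i < k') K l) =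
          \sum_l \mxblock_(i < k', j < k') (K l *m submxblock X i j *m adjmx (K l)).
  apply: eq_bigr => l _.
  by rewrite -{1}(submxblockK X) adjmx_mxdiag mul_mxdiag_mxblock mul_mxblock_mxdiag.
by rewrite /ampliation -mxblock_sum.
Qed.

Lemma CPset_kraus :
  CPset (\sum_i adjmx (K i) *m K i) (\sum_i K i *m adjmx (K i)) kraus.
Proof.
split.
- by move=> a X Y; rewrite -!krausM1 linmap_krausM.
- move=> k' X psdX; rewrite ampliation_kraus.
  by apply: psdmx_sum => l; apply: psdmx_conj.
- by apply: eq_bigr => i _; rewrite mulmx1.
move=> X; rewrite adjmx1 mul1mx -krausM1 mxtrace_krausM krausM_dual1 adjmx_sum.
by congr (\tr (_ *m X)); apply: eq_bigr => i _; rewrite adjmxM adjmxK mulmx1.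
Qed.

Lemma krausM_dual1_adjoint M Z :
  hs_adjoint_at (krausM M) 1%:M Z -> krausM_dual M 1%:M = adjmx Z.
Proof.
move=> hZ; apply/eqP; rewrite -subr_eq0; apply/eqP/mxtrace_mul_eq0 => X.
by rewrite mulmxBl linearB /= -mxtrace_krausM hZ adjmx1 mul1mx subrr.
Qed.

End Kraus.

Section Extreme.
Variables (C : numClosedFieldType) (n k : nat) (K : 'I_k -> 'M[C]_n).
Hypothesis gram_free : kraus_gram_free K.
Local Notation V := (kraus_vecmx K).
Local Notation A := (\sum_i adjmx (K i) *m K i).
Local Notation B := (\sum_i K i *m adjmx (K i)).

Lemma kraus_vecmx_row_full : row_full V.
Proof.
suff : row_free V^T by rewrite /row_free mxrank_tr.
rewrite -kermx_eq0; apply/eqP/row_matrixP => i.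
set u := row i (kermx V^T); rewrite row0.
have uV : V *m u^T = 0 by rewrite -[LHS]trmxK trmx_mul trmxK -row_mul mulmx_ker row0 trmx0.
set c := u^T *m adjmx u^T.
have choi0 : choi_mx (krausM K c) = choi_mx (fun _ => 0).
  by rewrite choi_krausM /c !mulmxA uV !mul0mx /choi_mx mxblock0.
have lin0 : linmap (fun _ : 'M[C]_n => 0 : 'M[C]_n) by move=> a X Y; rewrite scaler0 addr0.
have c0 := linmap_choi_eq (linmap_krausM K c) lin0 choi0.
have /(congr1 mxtrace) : c = 0.
  apply: gram_free; first exact: c0.
  by apply: mxtrace_mul_eq0 => X; rewrite -mxtrace_krausM c0 mxtrace0.
rewrite mxtrace_mulC trace_mx11 mxtrace0 => /adjmx_mul_eq0 /(congr1 trmx).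
by rewrite trmxK trmx0.
Qed.

Lemma kraus_summand_eq (Phi1 Phi2 : 'M[C]_n -> 'M[C]_n) (t : C) :
  CPset A B Phi1 -> completely_positive Phi2 -> 0 < t -> 0 <= 1 - t ->
  kraus K =1 (fun X => t *: Phi1 X + (1 - t) *: Phi2 X) -> Phi1 =1 kraus K.
Proof.
case=> lin1 cp1 Phi1_1 adj1 cp2 t_gt0 t_le1 decomp.
have [L LV] := row_fullP kraus_vecmx_row_full.
set M := L *m choi_mx Phi1 *m adjmx L.
have Phi1E : Phi1 =1 krausM K M.
  apply: linmap_choi_eq lin1 (linmap_krausM K M) _; rewrite choi_krausM.
  apply: psdmx_summand_factor LV (choi_mx_psd cp1) (choi_mx_psd cp2) t_gt0 t_le1 _.
  rewrite -[V in V *m _]mulmx1 -choi_krausM (eq_choi_mx (krausM1 K)) (eq_choi_mx decomp).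
  by rewrite /choi_mx mxblockD; congr (_ + _); apply/matrixP => a b; rewrite !mxE.
have M_B : krausM K M 1%:M = krausM K 1%:M 1%:M.
  by rewrite -Phi1E Phi1_1 krausM1; apply: eq_bigr => i _; rewrite mulmx1.
have M_A : krausM_dual K M 1%:M = krausM_dual K 1%:M 1%:M.
  rewrite (@krausM_dual1_adjoint _ _ _ _ _ A) => [|X]; last by rewrite -Phi1E adj1.
  rewrite krausM_dual1 adjmx_sum; apply: eq_bigr => i _.
  by rewrite adjmxM adjmxK mulmx1.
have M1 : M = 1%:M.
  apply/eqP; rewrite -subr_eq0; apply/eqP/gram_free.
    by rewrite krausMB M_B subrr.
  by rewrite krausM_dualB M_A subrr.
by move=> X; rewrite Phi1E M1 krausM1.
Qed.

Lemma kraus_extreme : extreme_point (CPset A B) (kraus K).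
Proof.
split=> [|[t [Phi1 [Phi2 [/andP[t_gt0 t_lt1] CP1 CP2 Phi12 decomp]]]]].
  exact: CPset_kraus.
have [[_ cp1 _ _] [_ cp2 _ _]] := (CP1, CP2).
have decomp' : kraus K =1 (fun X => t *: Phi1 X + (1 - t) *: Phi2 X) by rewrite decomp.
have t'_gt0 : 0 < 1 - t by rewrite subr_gt0.
have E1 := kraus_summand_eq CP1 cp2 t_gt0 (ltW t'_gt0) decomp'.
have E2 : Phi2 =1 kraus K.
  apply: (kraus_summand_eq CP2 cp1 t'_gt0); first by rewrite subKr ltW.
  by move=> X; rewrite decomp' subKr addrC.
by apply: Phi12; apply: boolp.funext => X; rewrite E1 E2.
Qed.

Lemma choi_rank_kraus : choi_rank (kraus K) = k.
Proof.
rewrite /choi_rank -(eq_choi_mx (krausM1 K)) choi_krausM mulmx1.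
have [L LV] := row_fullP kraus_vecmx_row_full.
apply/eqP; rewrite eqn_leq (leq_trans (mxrankM_maxl _ _) (rank_leq_col _)) /=.
have rk : \rank (L *m (V *m adjmx V) *m adjmx L) = k.
  by rewrite mulmxA -mulmxA -adjmxM LV adjmx1 mulmx1 mxrank1.
by rewrite -[X in (X <= _)%N]rk (leq_trans (mxrankM_maxl _ _) (mxrankM_maxr _ _)).
Qed.

End Extreme.

Lemma sum_if_eq (V : nmodType) (I : finType) (i0 : I) (F : I -> V) :
  \sum_i (if i0 == i then F i else 0) = F i0.
Proof. by rewrite -big_mkcond (big_pred1 i0) // => i; rewrite eq_sym. Qed.

Section PatternKraus.
Variables (C : numClosedFieldType) (n k : nat).
Variables (col : 'I_n -> 'I_n -> 'I_k) (x : 'I_n -> 'I_n -> C).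

Definition pattern_kraus (l : 'I_k) : 'M[C]_n :=
  \matrix_(a, b) if col a b == l then x a b else 0.
Local Notation K := pattern_kraus.

Lemma pattern_dual_entry (c : 'M[C]_k) b b' :
  krausM_dual K c 1%:M b b' = \sum_a c (col a b') (col a b) * ((x a b)^* * x a b').
Proof.
rewrite summxE; under eq_bigr do rewrite summxE.
under eq_bigr => i _ do under eq_bigr => j _ do rewrite mxE mulmx1 mxE mulr_sumr.
under eq_bigr do rewrite exchange_big; rewrite exchange_big; apply: eq_bigr => a _.
set z := (x a b)^* * x a b'.
rewrite -(sum_if_eq (col a b') (fun i => c i (col a b) * z)); apply: eq_bigr => i _.
case: eqP => [<-|/eqP ne]; last by rewrite big1 // => j _; rewrite !mxE (negbTE ne) !mulr0.
rewrite -(sum_if_eq (col a b) (fun j => c (col a b') j * z)); apply: eq_bigr => j _.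
by rewrite !mxE eqxx; case: eqP; rewrite ?conjC0 ?mul0r ?mulr0.
Qed.

Lemma pattern_kraus1_entry (c : 'M[C]_k) a a' :
  krausM K c 1%:M a a' = \sum_b c (col a b) (col a' b) * (x a b * (x a' b)^*).
Proof.
rewrite summxE; under eq_bigr do rewrite summxE.
under eq_bigr => i _ do under eq_bigr => j _ do rewrite mxE mulmx1 mxE mulr_sumr.
under eq_bigr do rewrite exchange_big; rewrite exchange_big; apply: eq_bigr => b _.
set z := x a b * (x a' b)^*.
rewrite -(sum_if_eq (col a b) (fun i => c i (col a' b) * z)); apply: eq_bigr => i _.
case: eqP => [<-|/eqP ne]; last by rewrite big1 // => j _; rewrite !mxE (negbTE ne) !mul0r mulr0.
rewrite -(sum_if_eq (col a' b) (fun j => c (col a b) j * z)); apply: eq_bigr => j _.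
by rewrite !mxE eqxx; case: eqP; rewrite ?conjC0 ?mul0r ?mulr0.
Qed.

Lemma pattern_offdiag_dual c a0 b b' : krausM_dual K c 1%:M = 0 ->
  x a0 b != 0 -> x a0 b' != 0 -> (forall a, a != a0 -> x a b = 0 \/ x a b' = 0) ->
  c (col a0 b') (col a0 b) = 0.
Proof.
move=> c0 xb xb' single; have := pattern_dual_entry c b b'.
rewrite c0 mxE (bigD1 a0) //= big1 => [|a /single[] ->]; last first.
- by rewrite !mulr0.
- by rewrite conjC0 mul0r mulr0.
rewrite addr0 => /esym/eqP; rewrite !mulf_eq0 conjC_eq0 (negbTE xb) (negbTE xb') !orbF.
by move/eqP.
Qed.

Lemma pattern_offdiag c a a' b0 : krausM K c 1%:M = 0 ->
  x a b0 != 0 -> x a' b0 != 0 -> (forall b, b != b0 -> x a b = 0 \/ x a' b = 0) ->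
  c (col a b0) (col a' b0) = 0.
Proof.
move=> c0 xa xa' single; have := pattern_kraus1_entry c a a'.
rewrite c0 mxE (bigD1 b0) //= big1 => [|b /single[] ->]; last first.
- by rewrite conjC0 !mulr0.
- by rewrite mul0r mulr0.
rewrite addr0 => /esym/eqP; rewrite !mulf_eq0 conjC_eq0 (negbTE xa) (negbTE xa') !orbF.
by move/eqP.
Qed.

Lemma pattern_diag_dual c b : krausM_dual K c 1%:M = 0 ->
  \sum_a c (col a b) (col a b) * `|x a b| ^+ 2 = 0.
Proof.
move=> c0; apply: etrans (_ : _ = krausM_dual K c 1%:M b b) _; last by rewrite c0 mxE.
by rewrite pattern_dual_entry; apply: eq_bigr => a _; rewrite normCK [(x a b)^* * _]mulrC.
Qed.

Lemma pattern_diag c a : krausM K c 1%:M = 0 ->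
  \sum_b c (col a b) (col a b) * `|x a b| ^+ 2 = 0.
Proof.
move=> c0; apply: etrans (_ : _ = krausM K c 1%:M a a) _; last by rewrite c0 mxE.
by rewrite pattern_kraus1_entry; apply: eq_bigr => b _; rewrite normCK.
Qed.

Lemma pattern_kraus_dual1 :
  (forall a b b', b != b' -> col a b = col a b' -> x a b = 0 \/ x a b' = 0) ->
  \sum_l adjmx (K l) *m K l = diag_mx (\row_b \sum_a `|x a b| ^+ 2).
Proof.
move=> sep; have -> : \sum_l adjmx (K l) *m K l = krausM_dual K 1%:M 1%:M.
  by rewrite krausM_dual1; apply: eq_bigr => l _; rewrite mulmx1.
apply/matrixP => b b'; rewrite pattern_dual_entry !mxE; case: eqP => [<-|/eqP bb'].
  by apply: eq_bigr => a _; rewrite mxE eqxx mul1r normCK mulrC.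
rewrite big1 // => a _; rewrite mxE; case: eqP => [e|]; last by rewrite mul0r.
by case: (sep a b b' bb' (esym e)) => ->; rewrite ?conjC0 ?mul0r ?mulr0.
Qed.

Lemma pattern_kraus_kraus1 :
  (forall a a' b, a != a' -> col a b = col a' b -> x a b = 0 \/ x a' b = 0) ->
  \sum_l K l *m adjmx (K l) = diag_mx (\row_a \sum_b `|x a b| ^+ 2).
Proof.
move=> sep; have -> : \sum_l K l *m adjmx (K l) = krausM K 1%:M 1%:M.
  by rewrite krausM1; apply: eq_bigr => l _; rewrite mulmx1.
apply/matrixP => a a'; rewrite pattern_kraus1_entry !mxE; case: eqP => [<-|/eqP aa'].
  by apply: eq_bigr => b _; rewrite mxE eqxx mul1r normCK.
rewrite big1 // => b _; rewrite mxE; case: eqP => [e|]; last by rewrite mul0r.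
by case: (sep a a' b aa' e) => ->; rewrite ?conjC0 ?mul0r ?mulr0.
Qed.

End PatternKraus.

Definition all_lt n (P : pred nat) : bool := all P (iota 0 n).
Definition has_lt n (P : pred nat) : bool := has P (iota 0 n).

Lemma all_ltP n (P : pred nat) : all_lt n P -> forall i : 'I_n, P i.
Proof. by move=> /allP hP i; apply: hP; rewrite mem_iota /=. Qed.

Lemma has_ltP n (P : pred nat) : has_lt n P -> exists i : 'I_n, P i.
Proof.
by case/hasP=> i; rewrite mem_iota /= => lt_in Pi; exists (Ordinal lt_in).
Qed.

Section Witness.
Variable R : realType.

Definition witness_ops : seq (seq nat) :=
  [:: [:: 0; 0; 4; 0; 0; 5];
      [:: 2; 0; 0; 0; 3; 0];
      [:: 0; 0; 0; 0; 0; 7];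
      [:: 6; 5; 0; 3; 0; 0];
      [:: 0; 0; 6; 1; 7; 0];
      [:: 0; 1; 0; 0; 4; 2]].

Definition witness_weights : seq (seq nat) :=
  [:: [:: 5; 0; 1;  0; 0; 3];
      [:: 1; 0; 0;  0; 8; 0];
      [:: 0; 0; 0;  1; 0; 8];
      [:: 3; 2; 0; 13; 0; 0];
      [:: 0; 0; 8;  4; 6; 0];
      [:: 0; 7; 0;  0; 4; 7]].

(* Cell (a, b) belongs to the operator [cell_op a b] and has squared modulus
   [cell_weight a b / 81]; cells of weight 0 are empty. *)
Definition cell_op (a b : nat) : nat := nth 0 (nth [::] witness_ops a) b.
Definition cell_weight (a b : nat) : nat := nth 0 (nth [::] witness_weights a) b.

Definition witness_col (a b : 'I_6) : 'I_8 := inord (cell_op a b).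
Definition witness_entry (a b : 'I_6) : R[i] := sqrtC ((cell_weight a b)%:R / 81).
Definition witness_kraus := pattern_kraus witness_col witness_entry.

Lemma witness_entry_eq0 a b : (witness_entry a b == 0) = (cell_weight a b == 0).
Proof. by rewrite sqrtC_eq0 mulf_eq0 invr_eq0 !pnatr_eq0 orbF. Qed.

Lemma normC_witness_entry a b : `|witness_entry a b| ^+ 2 = (cell_weight a b)%:R / 81.
Proof. by rewrite ger0_norm ?sqrtC_ge0 ?divr_ge0 ?ler0n // sqrtCK. Qed.

Lemma cell_op_lt a b : (a < 6)%N -> (b < 6)%N -> (cell_op a b < 8)%N.
Proof. by do 6?[case: a => [|a]] => //; do 6?[case: b => [|b]]. Qed.

Lemma witness_colE (a b : 'I_6) : witness_col a b = cell_op a b :> nat.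
Proof. by rewrite /witness_col inordK // cell_op_lt. Qed.

Lemma witness_col_sum (b : 'I_6) :
  (\sum_(a < 6) cell_weight a b = if b < 3 then 9 else 18)%N.
Proof. by rewrite !big_ord_recr big_ord0; case: b => [[|[|[|[|[|[|]]]]]]]. Qed.

Lemma witness_row_sum (a : 'I_6) :
  (\sum_(b < 6) cell_weight a b = if a < 3 then 9 else 18)%N.
Proof. by rewrite !big_ord_recr big_ord0; case: a => [[|[|[|[|[|[|]]]]]]]. Qed.

Lemma D_mxE :
  D_mx R[i] = diag_mx (\row_(b < 6) ((if (b < 3)%N then 9 else 18)%:R / 81)).
Proof.
apply/matrixP => i j; rewrite !mxE.
case: i => [[|[|[|[|[|[|i]]]]]] hi] //; case: j => [[|[|[|[|[|[|j]]]]]] hj] //=.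
all: by rewrite ?mul0r ?mulr0 //; field.
Qed.

Local Notation K := witness_kraus.

Lemma witness_lines_separated : all_lt 6 (fun a => all_lt 6 (fun b =>
  all_lt 6 (fun a' => all_lt 6 (fun b' =>
  [|| (a == a') && (b == b'), (a != a') && (b != b'),
      cell_weight a b == 0, cell_weight a' b' == 0 | cell_op a b != cell_op a' b'])))).
Proof. by []. Qed.

Lemma witness_separated (a b a' b' : 'I_6) :
  ((a : nat) != a') || ((b : nat) != b') -> ((a : nat) == a') || ((b : nat) == b') ->
  witness_col a b = witness_col a' b' ->
  witness_entry a b = 0 \/ witness_entry a' b' = 0.
Proof.
move=> ne line e.
have := all_ltP (all_ltP (all_ltP (all_ltP witness_lines_separated a) b) a') b'.
rewrite -!witness_colE e eqxx /= orbF.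
case/or4P => [/andP[aa bb] | /andP[naa nbb] | w0 | w0].
- by move: ne; rewrite aa bb.
- by move: line; rewrite (negbTE naa) (negbTE nbb).
- by left; apply/eqP; rewrite witness_entry_eq0.
- by right; apply/eqP; rewrite witness_entry_eq0.
Qed.

Lemma witness_kraus_dual1 : \sum_l adjmx (K l) *m K l = D_mx R[i].
Proof.
rewrite pattern_kraus_dual1 => [|a b b' bb']; last first.
  by apply: witness_separated; rewrite ?eqxx ?orbT //= ?orbF.
rewrite D_mxE; congr diag_mx; apply/rowP => b; rewrite !mxE.
under eq_bigr do rewrite normC_witness_entry.
by rewrite -mulr_suml -natr_sum witness_col_sum.
Qed.

Lemma witness_kraus_kraus1 : \sum_l K l *m adjmx (K l) = D_mx R[i].
Proof.
rewrite pattern_kraus_kraus1 => [|a a' b aa']; last first.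
  by apply: witness_separated; rewrite ?eqxx ?orbT //= ?orbF.
rewrite D_mxE; congr diag_mx; apply/rowP => a; rewrite !mxE.
under eq_bigr do rewrite normC_witness_entry.
by rewrite -mulr_suml -natr_sum witness_row_sum.
Qed.

Definition sole_common_row (a b b' : nat) : bool :=
  [&& cell_weight a b != 0, cell_weight a b' != 0 &
      all_lt 6 (fun a' => [|| a' == a, cell_weight a' b == 0 | cell_weight a' b' == 0])].

Definition sole_common_col (a a' b : nat) : bool :=
  [&& cell_weight a b != 0, cell_weight a' b != 0 &
      all_lt 6 (fun b' => [|| b' == b, cell_weight a b' == 0 | cell_weight a' b' == 0])].

Lemma witness_cover : all_lt 8 (fun i => all_lt 8 (fun j => [|| i == j,
  has_lt 6 (fun a => has_lt 6 (fun b => has_lt 6 (fun b' =>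
    [&& cell_op a b' == i, cell_op a b == j & sole_common_row a b b'])))
  | has_lt 6 (fun b => has_lt 6 (fun a => has_lt 6 (fun a' =>
    [&& cell_op a b == i, cell_op a' b == j & sole_common_col a a' b])))])).
Proof. by []. Qed.

Lemma witness_offdiag (c : 'M[R[i]]_8) :
  krausM K c 1%:M = 0 -> krausM_dual K c 1%:M = 0 ->
  forall i j : 'I_8, i != j -> c i j = 0.
Proof.
move=> c1 c2 i j ij.
have colE (a b : 'I_6) (l : 'I_8) : cell_op a b == l -> witness_col a b = l.
  by move=> /eqP e; apply: val_inj; rewrite /= witness_colE.
have nz (a b : 'I_6) : cell_weight a b != 0 -> witness_entry a b != 0.
  by rewrite witness_entry_eq0.
have zero (a b : 'I_6) : cell_weight a b == 0 -> witness_entry a b = 0.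
  by rewrite -witness_entry_eq0 => /eqP.
have ij' : (i : nat) != j := ij.
have := all_ltP (all_ltP witness_cover i) j; rewrite (negbTE ij') /=.
case/orP => /has_ltP[p] /has_ltP[q] /has_ltP[r] /and3P[opi opj /and3P[w1 w2 /all_ltP single]].
- rewrite -(colE _ _ _ opi) -(colE _ _ _ opj).
  apply: pattern_offdiag_dual c2 (nz _ _ w1) (nz _ _ w2) _ => a ne.
  by case/or3P: (single a) => [/eqP/ord_inj ap | /zero | /zero];
    [rewrite ap eqxx in ne | left | right].
- rewrite -(colE _ _ _ opi) -(colE _ _ _ opj).
  apply: pattern_offdiag c1 (nz _ _ w1) (nz _ _ w2) _ => b ne.
  by case/or3P: (single b) => [/eqP/ord_inj bq | /zero | /zero];
    [rewrite bq eqxx in ne | left | right].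
Qed.

Lemma witness_weights_full_rank (u : nat -> R) :
  (forall a, (a < 6)%N -> \sum_(b < 6) u (cell_op a b) *+ cell_weight a b = 0) ->
  (forall b, (b < 6)%N -> \sum_(a < 6) u (cell_op a b) *+ cell_weight a b = 0) ->
  forall l, (l < 8)%N -> u l = 0.
Proof.
move=> row col l lt_l8.
move: (row 0%N isT) (row 1%N isT) (row 2%N isT) (row 3%N isT) (row 4%N isT) (row 5%N isT).
move: (col 0%N isT) (col 1%N isT) (col 2%N isT) (col 3%N isT) (col 4%N isT) (col 5%N isT).
rewrite !big_ord_recr !big_ord0 /cell_op /cell_weight /=.
by move=> *; case: l lt_l8 => [|[|[|[|[|[|[|[|l]]]]]]]] // _; lra.
Qed.

Lemma complex_eq0 (z : R[i]) : complex.Re z = 0 -> complex.Im z = 0 -> z = 0.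
Proof. by case: z => a b /= -> ->. Qed.

Lemma sum_weights_eq0 (I : finType) (z : I -> R[i]) (w : I -> nat) :
  \sum_j z j * ((w j)%:R / 81) = 0 ->
  \sum_j complex.Re (z j) *+ w j = 0 /\ \sum_j complex.Im (z j) *+ w j = 0.
Proof.
under eq_bigr do rewrite mulrA mulr_natr.
rewrite -mulr_suml => /eqP; rewrite mulf_eq0 invr_eq0 pnatr_eq0 orbF => /eqP zw0.
have /(congr1 (@complex.Re R)) := zw0; have /(congr1 (@complex.Im R)) := zw0.
rewrite !raddf_sum => imE reE.
by split; [rewrite -[RHS]reE | rewrite -[RHS]imE]; apply: eq_bigr => j _; rewrite raddfMn.
Qed.

Lemma witness_diag (c : 'M[R[i]]_8) :
  krausM K c 1%:M = 0 -> krausM_dual K c 1%:M = 0 -> forall l : 'I_8, c l l = 0.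
Proof.
move=> c1 c2 l; pose d m := c (inord m) (inord m).
have row a (lt_a6 : (a < 6)%N) : \sum_(b < 6)
    c (inord (cell_op a b)) (inord (cell_op a b)) * ((cell_weight a b)%:R / 81) = 0.
  apply: etrans (pattern_diag (Ordinal lt_a6) c1).
  by apply: eq_bigr => b _; rewrite normC_witness_entry.
have col b (lt_b6 : (b < 6)%N) : \sum_(a < 6)
    c (inord (cell_op a b)) (inord (cell_op a b)) * ((cell_weight a b)%:R / 81) = 0.
  apply: etrans (pattern_diag_dual (Ordinal lt_b6) c2).
  by apply: eq_bigr => a _; rewrite normC_witness_entry.
rewrite -[l]inord_val; apply: complex_eq0.
- apply: (witness_weights_full_rank (u := fun m => complex.Re (d m))) (ltn_ord l).
    by move=> a /row /sum_weights_eq0 [].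
  by move=> b /col /sum_weights_eq0 [].
- apply: (witness_weights_full_rank (u := fun m => complex.Im (d m))) (ltn_ord l).
    by move=> a /row /sum_weights_eq0 [].
  by move=> b /col /sum_weights_eq0 [].
Qed.

Lemma witness_gram_free : kraus_gram_free K.
Proof.
move=> c c1 c2; apply/matrixP => i j; rewrite mxE.
by have [<-|/(witness_offdiag c1 c2)] := eqVneq i j; first exact: witness_diag.
Qed.

End Witness.

Theorem mainTheorem8 (R : realType) :
  exists Phi : 'M[R[i]]_6 -> 'M[R[i]]_6,
    extreme_point (CPset (D_mx R[i]) (D_mx R[i])) Phi /\ choi_rank Phi = 8%N.
Proof.
exists (kraus (witness_kraus R)); split; last exact: choi_rank_kraus (@witness_gram_free R).
rewrite -{1}(witness_kraus_dual1 R) -(witness_kraus_kraus1 R).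
exact: kraus_extreme (@witness_gram_free R).
Qed.
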